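(* Let $s>0$, $r>0$, $L_\infty>0$, $L_0>0$, and let $\alpha,\beta$ satisfy $0<\alpha\le 1$, $0<\beta\le1$, with $n:=\alpha+\beta$. Assume $n\neq 1$ and $\alpha\neq 1$. Set $L_*:=L_\infty-L_0$. Let $k$ be a positive solution, defined on an interval containing $0$, of the Cauchy problem $$\dot k = s\left(L_\infty-L_*e^{-rt}\right)^{n-1}k^{\alpha}-rL_*e^{-rt}k,\qquad k(0)=k_0.$$ Then for all $t\ge 0$ in that interval $$k(t)=\left( e^{-(\alpha-1)L_*e^{-rt}}\left(k_0^{1-\alpha}e^{(\alpha-1)L_*}-(\alpha-1)\int_0^t\mathcal L(\tau)\,d\tau\right)\right)^{\frac{1}{1-\alpha}},$$ where $$\mathcal L(\tau):=\frac{s\left(L_\infty-L_*e^{-r\tau}\right)^{n}\exp\!\left[r\tau+(\alpha-1)L_*e^{-r\tau}\right]}{L_\infty\left(e^{r\tau}-1\right)+L_0}.$$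
   Context: $\dot{}$ denotes the derivative with respect to time $t$. The function $L(t)=L_\infty-L_*e^{-rt}$ (von Bertalanffy labor force) is positive for $t\ge 0$ under the given assumptions, and the equation comes from a Solow-Swan type model with Cobb-Douglas production $F(K,L)=K^\alpha L^\beta$. *)

From Stdlib Require Import Reals.
From Coquelicot Require Import Coquelicot.
Open Scope R_scope.

Definition is_interval (I : R -> Prop) : Prop :=
  forall a b x, I a -> I b -> a <= x <= b -> I x.

(* [f] has derivative [df] at [t] relative to the interval [I]
   (two-sided at interior points, one-sided at endpoints belonging to I). *)
Definition has_derivative_within (I : R -> Prop) (f : R -> R) (t df : R) : Prop :=
  filterlim (fun h => (f (t + h) - f t) / h)
    (within (fun h => h <> 0 /\ I (t + h)) (locally 0)) (locally df).

Definition labor (Linf L0 r t : R) : R := Linf - (Linf - L0) * exp (- r * t).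

Definition calL (s r Linf L0 alpha beta tau : R) : R :=
  s * Rpower (labor Linf L0 r tau) (alpha + beta)
    * exp (r * tau + (alpha - 1) * (Linf - L0) * exp (- r * tau))
  / (Linf * (exp (r * tau) - 1) + L0).

From Stdlib Require Import Reals Lra.
From Coquelicot Require Import Coquelicot.
Open Scope R_scope.

(* Bernoulli substitution.  With u = k^(1-alpha) the equation becomes linear,
   u' = (1-alpha) (s L^(n-1) - r L_* e^(-rt) u), and mu(t) = exp (-(1-alpha) L_* e^(-rt))
   is an integrating factor: (mu u)' = (1-alpha) s L^(n-1) mu = (1-alpha) calL, because the
   denominator of calL is e^(rt) L(t).  Hence mu k^(1-alpha) - (1-alpha) int_0^t calL is
   constant on [0, t]; k is only differentiable relative to I, so constancy is obtained on
   (0, t) by the mean value theorem and carried to the endpoints by one-sided continuity. *)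

Section DerivativeWithin.

Variables (I : R -> Prop) (f : R -> R) (t df : R).
Hypothesis f_der : has_derivative_within I f t df.

Lemma has_derivative_within_eps eps : 0 < eps ->
  exists d, 0 < d /\ forall h, h <> 0 -> I (t + h) -> Rabs h < d ->
    Rabs ((f (t + h) - f t) / h - df) < eps.
Proof.
  intros eps_pos.
  destruct (proj1 (filterlim_locally _ _) f_der (mkposreal eps eps_pos)) as [d Hd].
  exists d; split; [apply cond_pos|].
  intros h h_neq0 Ih h_small; apply (Hd h); [|split; assumption].
  change (Rabs (h - 0) < d); rewrite Rminus_0_r; exact h_small.
Qed.

Lemma has_derivative_within_continuous :
  filterlim f (within I (locally t)) (locally (f t)).
Proof.
  apply filterlim_locally; intros eps.
  destruct (has_derivative_within_eps 1 Rlt_0_1) as [d [d_pos Hq]].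
  set (M := Rabs df + 1).
  assert (M_pos : 0 < M) by (pose proof (Rabs_pos df); unfold M; lra).
  assert (delta_pos : 0 < Rmin d (eps / M))
    by (apply Rmin_pos; [lra | apply Rdiv_lt_0_compat; [apply cond_pos | lra]]).
  exists (mkposreal _ delta_pos); intros y y_near Iy.
  change (Rabs (y - t) < Rmin d (eps / M)) in y_near; change (Rabs (f y - f t) < eps).
  pose proof (Rmin_l d (eps / M)); pose proof (Rmin_r d (eps / M)).
  destruct (Req_dec y t) as [->|y_neq].
  { rewrite Rminus_diag, Rabs_R0; apply cond_pos. }
  set (h := y - t) in *.
  replace y with (t + h) in Iy |- * by (unfold h; ring).
  assert (h_neq0 : h <> 0) by (unfold h; lra).
  specialize (Hq h h_neq0 Iy ltac:(lra)).
  assert (quot_le : Rabs ((f (t + h) - f t) / h) <= M).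
  { pose proof (Rabs_triang_inv ((f (t + h) - f t) / h) df); unfold M; lra. }
  replace (f (t + h) - f t) with (h * ((f (t + h) - f t) / h)) by (field; exact h_neq0).
  rewrite Rabs_mult.
  apply Rle_lt_trans with (Rabs h * M).
  - apply Rmult_le_compat_l; [apply Rabs_pos | exact quot_le].
  - apply Rlt_le_trans with (eps / M * M).
    + apply Rmult_lt_compat_r; lra.
    + right; field; lra.
Qed.

Lemma has_derivative_within_interior e : 0 < e ->
  (forall y, Rabs (y - t) < e -> I y) -> is_derive f t df.
Proof.
  intros e_pos near_in_I; apply is_derive_Reals; intros eps eps_pos.
  destruct (has_derivative_within_eps eps eps_pos) as [d [d_pos Hq]].
  exists (mkposreal _ (Rmin_pos _ _ d_pos e_pos)); simpl; intros h h_neq0 h_small.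
  pose proof (Rmin_l d e); pose proof (Rmin_r d e).
  apply Hq; [exact h_neq0 | apply near_in_I | lra].
  replace (t + h - t) with h by ring; lra.
Qed.

End DerivativeWithin.

Section FilterlimArith.

Context {T : Type} (F : (T -> Prop) -> Prop) {FF : Filter F}.

Lemma filterlim_Rmult (f g : T -> R) lf lg :
  filterlim f F (locally lf) -> filterlim g F (locally lg) ->
  filterlim (fun y => f y * g y) F (locally (lf * lg)).
Proof.
  intros f_lim g_lim; apply (filterlim_comp_2 f g Rmult f_lim g_lim).
  exact (filterlim_mult (K := R_AbsRing) lf lg).
Qed.

Lemma filterlim_Rplus (f g : T -> R) lf lg :
  filterlim f F (locally lf) -> filterlim g F (locally lg) ->
  filterlim (fun y => f y + g y) F (locally (lf + lg)).
Proof.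
  intros f_lim g_lim; apply (filterlim_comp_2 f g Rplus f_lim g_lim).
  exact (filterlim_plus (V := R_NormedModule) lf lg).
Qed.

End FilterlimArith.

Lemma filterlim_within_of_is_derive (D : R -> Prop) (f : R -> R) p df :
  is_derive f p df -> filterlim f (within D (locally p)) (locally (f p)).
Proof.
  intros f_der; apply (filterlim_filter_le_1 _ (filter_le_within D)).
  apply (ex_derive_continuous (V := R_NormedModule)); exists df; exact f_der.
Qed.

Lemma filterlim_within_adherent_eq (D : R -> Prop) (G : R -> R) p c :
  filterlim G (within D (locally p)) (locally (G p)) ->
  (forall d, 0 < d -> exists y, D y /\ Rabs (y - p) < d /\ G y = c) ->
  G p = c.
Proof.
  intros G_lim c_adh; destruct (Req_dec (G p) c) as [E|E]; [exact E|exfalso].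
  assert (gap : 0 < Rabs (c - G p)) by (apply Rabs_pos_lt; lra).
  destruct (proj1 (filterlim_locally _ _) G_lim (mkposreal _ gap)) as [d Hd].
  destruct (c_adh d (cond_pos d)) as [y [Dy [y_near Gy]]].
  specialize (Hd y y_near Dy); change (Rabs (G y - G p) < Rabs (c - G p)) in Hd.
  rewrite Gy in Hd; lra.
Qed.

Lemma derive_0_const_open (G : R -> R) a b :
  (forall x, a < x < b -> is_derive G x 0) ->
  forall x y, a < x < b -> a < y < b -> G x = G y.
Proof.
  intros G_der x y Hx Hy.
  assert (in_ab : forall z, Rmin x y <= z <= Rmax x y -> a < z < b).
  { intros z Hz.
    pose proof (Rmin_glb_lt x y a ltac:(lra) ltac:(lra)).
    pose proof (Rmax_lub_lt x y b ltac:(lra) ltac:(lra)); lra. }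
  destruct (MVT_gen G x y (fun _ => 0)) as [c [_ mvt]].
  - intros z Hz; apply G_der, in_ab; lra.
  - intros z Hz; apply continuity_pt_filterlim, (ex_derive_continuous (V := R_NormedModule)).
    exists 0; apply G_der, in_ab, Hz.
  - lra.
Qed.

Lemma derive_0_eq_endpoints (D : R -> Prop) (G : R -> R) a b : a <= b ->
  (forall y, a <= y <= b -> D y) ->
  filterlim G (within D (locally a)) (locally (G a)) ->
  filterlim G (within D (locally b)) (locally (G b)) ->
  (forall x, a < x < b -> is_derive G x 0) ->
  G a = G b.
Proof.
  intros ab ab_in_D Ga_lim Gb_lim G_der.
  destruct (Req_dec a b) as [<-|a_neq_b]; [reflexivity|].
  set (m := (a + b) / 2).
  assert (G_const := derive_0_const_open G a b G_der).
  (* the endpoints are approached from inside by [a + e] and [b - e], [e := min d (b - a) / 2] *)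
  assert (step : forall d, 0 < d -> 0 < Rmin d (b - a) / 2 < d /\ Rmin d (b - a) / 2 < b - a).
  { intros d d_pos; pose proof (Rmin_l d (b - a)); pose proof (Rmin_r d (b - a)).
    pose proof (Rmin_pos d (b - a) d_pos ltac:(lra)); lra. }
  transitivity (G m); [|symmetry].
  - apply (filterlim_within_adherent_eq D G a _ Ga_lim); intros d d_pos.
    destruct (step d d_pos) as [[e_pos e_lt] e_ab].
    exists (a + Rmin d (b - a) / 2); repeat split.
    + apply ab_in_D; lra.
    + rewrite Rplus_minus_l, Rabs_pos_eq; lra.
    + apply G_const; unfold m; lra.
  - apply (filterlim_within_adherent_eq D G b _ Gb_lim); intros d d_pos.
    destruct (step d d_pos) as [[e_pos e_lt] e_ab].
    exists (b - Rmin d (b - a) / 2); repeat split.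
    + apply ab_in_D; lra.
    + replace (b - Rmin d (b - a) / 2 - b) with (- (Rmin d (b - a) / 2)) by ring.
      rewrite Rabs_Ropp, Rabs_pos_eq; lra.
    + apply G_const; unfold m; lra.
Qed.

Lemma is_derive_bernoulli_substitution (k mu : R -> R) (alpha a b x : R) :
  0 < k x ->
  is_derive k x (a * Rpower (k x) alpha - b * k x) ->
  is_derive mu x ((1 - alpha) * b * mu x) ->
  is_derive (fun y => mu y * Rpower (k y) (1 - alpha)) x ((1 - alpha) * a * mu x).
Proof.
  intros kx_pos k_der mu_der.
  assert (pow_der : is_derive (fun z => Rpower z (1 - alpha)) (k x)
                      ((1 - alpha) * Rpower (k x) (- alpha))).
  { apply is_derive_Reals.
    replace (- alpha) with (1 - alpha - 1) by ring.
    exact (derivable_pt_lim_power (k x) (1 - alpha) kx_pos). }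
  assert (prod_der := is_derive_mult _ _ _ _ _ mu_der (is_derive_comp _ _ x _ _ pow_der k_der) Rmult_comm).
  replace ((1 - alpha) * a * mu x) with
    (plus (mult ((1 - alpha) * b * mu x) (Rpower (k x) (1 - alpha)))
          (mult (mu x) ((a * Rpower (k x) alpha - b * k x) * ((1 - alpha) * Rpower (k x) (- alpha))))).
  { exact prod_der. }
  unfold plus, mult; simpl.
  assert (inv_alpha : Rpower (k x) (- alpha) * Rpower (k x) alpha = 1).
  { rewrite <- Rpower_plus, Rplus_opp_l; apply Rpower_O, kx_pos. }
  assert (one_minus_alpha : Rpower (k x) (- alpha) * k x = Rpower (k x) (1 - alpha)).
  { rewrite <- (Rpower_1 (k x)) at 2 by exact kx_pos.
    rewrite <- Rpower_plus; f_equal; ring. }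
  transitivity ((1 - alpha) * mu x * (a * (Rpower (k x) (- alpha) * Rpower (k x) alpha)
     + b * (Rpower (k x) (1 - alpha) - Rpower (k x) (- alpha) * k x))).
  - ring.
  - rewrite inv_alpha, one_minus_alpha; ring.
Qed.

Definition integrating_factor (alpha Linf L0 r y : R) : R :=
  exp (- (1 - alpha) * (Linf - L0) * exp (- r * y)).

Lemma is_derive_integrating_factor alpha Linf L0 r x :
  is_derive (integrating_factor alpha Linf L0 r) x
    ((1 - alpha) * (r * (Linf - L0) * exp (- r * x)) * integrating_factor alpha Linf L0 r x).
Proof. unfold integrating_factor; auto_derive; [exact I | ring]. Qed.

Section LaborForce.

Variables (Linf L0 r : R).
Hypotheses (Linf_pos : 0 < Linf) (L0_pos : 0 < L0) (r_pos : 0 < r).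

Lemma labor_pos z : 0 <= z -> 0 < labor Linf L0 r z.
Proof.
  intros z_nonneg; unfold labor.
  assert (0 < exp (- r * z)) by apply exp_pos.
  assert (exp (- r * z) <= 1).
  { rewrite <- exp_0; destruct (Rle_lt_or_eq_dec 0 z z_nonneg) as [z_pos | <-].
    - left; apply exp_increasing; nra.
    - right; f_equal; ring. }
  destruct (Rle_dec 0 (Linf - L0)); nra.
Qed.

Lemma labor_pos_near_nonneg :
  exists d, 0 < d /\ forall z, - d < z -> 0 < labor Linf L0 r z.
Proof.
  assert (labor_cont : continuous (labor Linf L0 r) 0).
  { apply (ex_derive_continuous (V := R_NormedModule)); unfold labor; auto_derive; exact I. }
  assert (labor_0 : labor Linf L0 r 0 = L0).
  { unfold labor; rewrite Rmult_0_r, exp_0; ring. }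
  destruct (proj1 (filterlim_locally _ _) labor_cont (mkposreal _ L0_pos)) as [d Hd].
  exists d; split; [apply cond_pos|]; intros z z_gt.
  destruct (Rle_dec 0 z) as [z_nonneg|z_neg]; [exact (labor_pos z z_nonneg)|].
  assert (near : Rabs (labor Linf L0 r z - labor Linf L0 r 0) < L0).
  { apply (Hd z); change (Rabs (z - 0) < d); rewrite Rminus_0_r, Rabs_left; lra. }
  rewrite labor_0 in near; apply Rabs_def2 in near; lra.
Qed.

Lemma calL_denominator_eq z :
  Linf * (exp (r * z) - 1) + L0 = exp (r * z) * labor Linf L0 r z.
Proof.
  unfold labor; replace (- r * z) with (- (r * z)) by ring; rewrite exp_Ropp.
  field; apply Rgt_not_eq, exp_pos.
Qed.

Lemma calL_eq s alpha beta z : 0 < labor Linf L0 r z ->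
  calL s r Linf L0 alpha beta z =
  s * Rpower (labor Linf L0 r z) (alpha + beta - 1) * integrating_factor alpha Linf L0 r z.
Proof.
  intros labor_z_pos.
  unfold calL, integrating_factor; rewrite calL_denominator_eq.
  replace (alpha + beta) with ((alpha + beta - 1) + 1) at 1 by ring.
  rewrite Rpower_plus, Rpower_1, exp_plus by exact labor_z_pos.
  replace ((alpha - 1) * (Linf - L0) * exp (- r * z))
    with (- (1 - alpha) * (Linf - L0) * exp (- r * z)) by ring.
  field; split; apply Rgt_not_eq; [exact labor_z_pos | apply exp_pos].
Qed.

Lemma calL_continuous s alpha beta z : 0 < labor Linf L0 r z ->
  continuous (calL s r Linf L0 alpha beta) z.
Proof.
  intros labor_z_pos.
  assert (denom_neq0 : Linf * (exp (r * z) - 1) + L0 <> 0).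
  { rewrite calL_denominator_eq; apply Rgt_not_eq, Rmult_lt_0_compat; [apply exp_pos | exact labor_z_pos]. }
  apply (ex_derive_continuous (V := R_NormedModule)).
  unfold calL, Rpower, labor in *; auto_derive; auto.
Qed.

Lemma is_derive_RInt_calL s alpha beta p : 0 <= p ->
  is_derive (fun y => RInt (calL s r Linf L0 alpha beta) 0 y) p (calL s r Linf L0 alpha beta p).
Proof.
  intros p_nonneg; destruct labor_pos_near_nonneg as [d [d_pos labor_pos_d]].
  apply (is_derive_RInt _ _ 0); [|apply calL_continuous, labor_pos_d; lra].
  exists (mkposreal d d_pos); intros y y_near; change (Rabs (y - p) < d) in y_near.
  apply (RInt_correct (V := R_CompleteNormedModule)), (ex_RInt_continuous (V := R_CompleteNormedModule)).
  intros z z_between; apply calL_continuous, labor_pos_d.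
  apply Rabs_def2 in y_near; pose proof (Rmin_glb_lt 0 y (- d) ltac:(lra) ltac:(lra)).
  lra.
Qed.

End LaborForce.

Definition first_integral (s r Linf L0 alpha beta : R) (k : R -> R) (y : R) : R :=
  integrating_factor alpha Linf L0 r y * Rpower (k y) (1 - alpha)
  - (1 - alpha) * RInt (calL s r Linf L0 alpha beta) 0 y.

Section Solution.

Variables (s r Linf L0 alpha beta : R) (I : R -> Prop) (k : R -> R).
Hypotheses (r_pos : 0 < r) (Linf_pos : 0 < Linf) (L0_pos : 0 < L0).
Hypotheses (I_interval : is_interval I) (I_0 : I 0).
Hypothesis k_pos : forall t, I t -> 0 < k t.
Hypothesis k_ode : forall t, I t ->
  has_derivative_within I k t
    (s * Rpower (labor Linf L0 r t) (alpha + beta - 1) * Rpower (k t) alpha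
     - r * (Linf - L0) * exp (- r * t) * k t).

Lemma first_integral_continuous_within p : I p -> 0 <= p ->
  filterlim (first_integral s r Linf L0 alpha beta k) (within I (locally p))
    (locally (first_integral s r Linf L0 alpha beta k p)).
Proof.
  intros Ip p_nonneg.
  assert (pow_cont : continuous (fun z => Rpower z (1 - alpha)) (k p)).
  { apply (ex_derive_continuous (V := R_NormedModule)); unfold Rpower; auto_derive.
    exact (k_pos p Ip). }
  assert (pow_k_lim := filterlim_comp _ _ _ _ _ _ _ _
    (has_derivative_within_continuous I k p _ (k_ode p Ip)) pow_cont).
  assert (mu_lim := filterlim_within_of_is_derive I _ p _
    (is_derive_integrating_factor alpha Linf L0 r p)).
  assert (RInt_lim := filterlim_within_of_is_derive I _ p _
    (is_derive_RInt_calL Linf L0 r Linf_pos L0_pos r_pos s alpha beta p p_nonneg)).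
  assert (lim := filterlim_Rplus _ _ _ _ _ (filterlim_Rmult _ _ _ _ _ mu_lim pow_k_lim)
    (filterlim_Rmult _ _ _ _ _ (filterlim_const (- (1 - alpha))) RInt_lim)).
  replace (first_integral s r Linf L0 alpha beta k p)
    with (integrating_factor alpha Linf L0 r p * Rpower (k p) (1 - alpha)
          + - (1 - alpha) * RInt (calL s r Linf L0 alpha beta) 0 p)
    by (unfold first_integral; ring).
  eapply filterlim_ext; [|exact lim]; intros y; unfold first_integral; ring.
Qed.

Lemma first_integral_derive_0 t : I t -> forall x, 0 < x < t ->
  is_derive (first_integral s r Linf L0 alpha beta k) x 0.
Proof.
  intros It x x_between.
  assert (I_0t : forall y, 0 <= y <= t -> I y) by (intros y; apply I_interval; assumption).
  assert (k_der : is_derive k x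
    (s * Rpower (labor Linf L0 r x) (alpha + beta - 1) * Rpower (k x) alpha
     - r * (Linf - L0) * exp (- r * x) * k x)).
  { apply (has_derivative_within_interior I k x _ (k_ode x (I_0t x ltac:(lra))) (Rmin x (t - x)));
      [apply Rmin_pos; lra|].
    intros y y_near; apply I_0t; apply Rabs_def2 in y_near.
    pose proof (Rmin_l x (t - x)); pose proof (Rmin_r x (t - x)); lra. }
  assert (subst_der := is_derive_bernoulli_substitution k _ alpha _ _ x
    (k_pos x (I_0t x ltac:(lra))) k_der (is_derive_integrating_factor alpha Linf L0 r x)).
  assert (RInt_der := is_derive_RInt_calL Linf L0 r Linf_pos L0_pos r_pos s alpha beta x ltac:(lra)).
  assert (der := is_derive_minus _ _ _ _ _ subst_der (is_derive_scal _ _ (1 - alpha) _ RInt_der)).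
  apply (eq_ind _ (is_derive (first_integral s r Linf L0 alpha beta k) x) der).
  rewrite calL_eq by (apply labor_pos; lra).
  unfold minus, plus, opp, scal; simpl; unfold mult; simpl; ring.
Qed.

End Solution.

Lemma Rpower_Rpower_inv x a : 0 < x -> a <> 0 -> Rpower (Rpower x a) (1 / a) = x.
Proof.
  intros x_pos a_neq0; rewrite Rpower_mult.
  replace (a * (1 / a)) with 1 by (field; exact a_neq0); apply Rpower_1, x_pos.
Qed.

Lemma eq_of_first_integral s r Linf L0 alpha beta (k : R -> R) t :
  alpha <> 1 -> 0 < k t ->
  first_integral s r Linf L0 alpha beta k 0 = first_integral s r Linf L0 alpha beta k t ->
  k t = Rpower
    (exp (- (alpha - 1) * (Linf - L0) * exp (- r * t))
     * (Rpower (k 0) (1 - alpha) * exp ((alpha - 1) * (Linf - L0))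
        - (alpha - 1) * RInt (calL s r Linf L0 alpha beta) 0 t))
    (1 / (1 - alpha)).
Proof.
  intros alpha_neq1 kt_pos conserved.
  unfold first_integral, integrating_factor in conserved.
  rewrite RInt_point, Rmult_0_r, exp_0 in conserved.
  change (@zero R_CompleteNormedModule) with 0 in conserved.
  (* the bracket is mu(t) k(t)^(1 - alpha) and the prefactor is 1 / mu(t) *)
  replace (Rpower (k 0) (1 - alpha) * exp ((alpha - 1) * (Linf - L0))
           - (alpha - 1) * RInt (calL s r Linf L0 alpha beta) 0 t)
    with (exp (- (1 - alpha) * (Linf - L0) * exp (- r * t)) * Rpower (k t) (1 - alpha)).
  - rewrite <- Rmult_assoc, <- exp_plus.
    replace (- (alpha - 1) * (Linf - L0) * exp (- r * t)
             + - (1 - alpha) * (Linf - L0) * exp (- r * t)) with 0 by ring.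
    rewrite exp_0, Rmult_1_l, Rpower_Rpower_inv; [reflexivity | exact kt_pos | lra].
  - replace ((alpha - 1) * (Linf - L0)) with (- (1 - alpha) * (Linf - L0) * 1) by ring.
    lra.
Qed.

Theorem theorem2 (s r Linf L0 alpha beta k0 : R) (I : R -> Prop) (k : R -> R)
  (hs : 0 < s) (hr : 0 < r) (hLinf : 0 < Linf) (hL0 : 0 < L0)
  (ha : 0 < alpha <= 1) (hb : 0 < beta <= 1)
  (hn : alpha + beta <> 1) (ha1 : alpha <> 1)
  (hI : is_interval I) (hI0 : I 0)
  (hpos : forall t, I t -> 0 < k t)
  (hode : forall t, I t ->
     has_derivative_within I k t
       (s * Rpower (labor Linf L0 r t) (alpha + beta - 1) * Rpower (k t) alpha
        - r * (Linf - L0) * exp (- r * t) * k t))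
  (hk0 : k 0 = k0) :
  forall t, I t -> 0 <= t ->
    k t = Rpower
      (exp (- (alpha - 1) * (Linf - L0) * exp (- r * t))
       * (Rpower k0 (1 - alpha) * exp ((alpha - 1) * (Linf - L0))
          - (alpha - 1) * RInt (calL s r Linf L0 alpha beta) 0 t))
      (1 / (1 - alpha)).
Proof.
  intros t It t_nonneg; rewrite <- hk0.
  pose proof (first_integral_continuous_within s r Linf L0 alpha beta I k hr hLinf hL0 hpos hode)
    as continuous_within.
  apply eq_of_first_integral; [exact ha1 | exact (hpos t It) |].
  apply (derive_0_eq_endpoints I); [exact t_nonneg | ..].
  - intros y y_between; exact (hI 0 t y hI0 It y_between).
  - exact (continuous_within 0 hI0 (Rle_refl 0)).
  - exact (continuous_within t It t_nonneg).
  - exact (first_integral_derive_0 s r Linf L0 alpha beta I k hr hLinf hL0 hI hI0 hpos hode t It).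
Qed.
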